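(* If $V=\langle v_1,\dots,v_\ell\rangle$ is a sequence of moves that can be applied (successively) to the distribution $\mu$, then $M_2[V\mu]\le M_2[\bar V\mu]$, where $\bar V$ is the sequence of extreme moves on the same intervals.
   Context: A distribution is a finite set $\{(x_1,m_1),\dots,(x_k,m_k)\}$, $m_i>0$; $\mu(A)=\sum_{x_i\in A}m_i$; $M_j[\mu]=\sum_im_ix_i^j$. A move $v=([a,b],\delta)$ has $\delta$ a signed distribution on $[a,b]$ with $M_0[\delta]=M_1[\delta]=0$; it applies to $\mu$ if $\mu+\delta$ is a distribution, and $v\mu=\mu+\delta$; $V\mu$ is the result of applying the moves in order. The extreme move $\bar v$ on $[a,b]$ maps $\mu$ to the distribution $\mu'$ with $\mu'\{a<x<b\}=0$, $\mu'(\{x\})=\mu(\{x\})$ for $x\notin[a,b]$, $M_0[\mu']=M_0[\mu]$, $M_1[\mu']=M_1[\mu]$. *)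

From HB Require Import structures.
From mathcomp Require Import all_boot all_order all_algebra.
Set Implicit Arguments. Unset Strict Implicit. Unset Printing Implicit Defensive.
Import Order.TTheory GRing.Theory Num.Theory.
Local Open Scope ring_scope.

Section Moves.
Variable R : realFieldType.

(* A (signed) distribution is represented by a finite list of atoms (x, m). *)
Definition atoms := seq (R * R).

Definition meas (mu : atoms) (A : pred R) : R := \sum_(p <- mu | A p.1) p.2.

Definition mass (mu : atoms) (x : R) : R := meas mu (pred1 x).

Definition moment (j : nat) (mu : atoms) : R := \sum_(p <- mu) p.2 * p.1 ^+ j.

Definition is_distribution (mu : atoms) : Prop :=
  uniq (map fst mu) /\ (forall p, p \in mu -> 0 < p.2).

Definition is_signed_distribution (d : atoms) : Prop :=
  uniq (map fst d) /\ (forall p, p \in d -> p.2 != 0).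

Record move := Move { mv_a : R; mv_b : R; mv_delta : atoms }.

Definition is_move (v : move) : Prop :=
  mv_a v <= mv_b v /\
  is_signed_distribution (mv_delta v) /\
  (forall p, p \in mv_delta v -> mv_a v <= p.1 <= mv_b v) /\
  moment 0 (mv_delta v) = 0 /\ moment 1 (mv_delta v) = 0.

Definition apply_move (v : move) (mu nu : atoms) : Prop :=
  is_distribution nu /\
  forall x, mass nu x = mass mu x + mass (mv_delta v) x.

Definition extreme_move (a b : R) (mu mu' : atoms) : Prop :=
  is_distribution mu' /\
  meas mu' (fun x => a < x < b) = 0 /\
  (forall x, ~~ (a <= x <= b) -> mass mu' x = mass mu x) /\
  moment 0 mu' = moment 0 mu /\ moment 1 mu' = moment 1 mu.

Inductive apply_seq : seq move -> atoms -> atoms -> Prop :=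
| apply_nil mu : apply_seq [::] mu mu
| apply_cons v vs mu mu' nu :
    apply_move v mu mu' -> apply_seq vs mu' nu -> apply_seq (v :: vs) mu nu.

Inductive extreme_seq : seq move -> atoms -> atoms -> Prop :=
| extreme_nil mu : extreme_seq [::] mu mu
| extreme_cons v vs mu mu' nu :
    extreme_move (mv_a v) (mv_b v) mu mu' -> extreme_seq vs mu' nu ->
    extreme_seq (v :: vs) mu nu.

Fixpoint all_moves (V : seq move) : Prop :=
  if V is v :: vs then is_move v /\ all_moves vs else True.

End Moves.

From HB Require Import structures.
From mathcomp Require Import all_boot all_order all_algebra.
From mathcomp Require Import ring.
Set Implicit Arguments. Unset Strict Implicit. Unset Printing Implicit Defensive.
Import Order.TTheory GRing.Theory Num.Theory.
Local Open Scope ring_scope.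

(* Proof idea: compare lists of atoms in the convex order [cx_le]: mu <=cx nu
   when \int phi dmu <= \int phi dnu for every convex phi : R -> R.  As x^2 is
   convex, it suffices to show that the convex order is preserved when the
   moves of V act on the left and the extreme moves of bar V on the right.
   For an interval [a,b] and a convex phi, let [chordal phi a b] be phi with
   its graph over [a,b] replaced by the chord; it is convex, lies above phi,
   and is affine on [a,b].  Hence
   - a move on [a,b] does not change \int (chordal phi a b), as its signed
     part lives on [a,b] and has vanishing moments of order 0 and 1;
   - the extreme move on [a,b] sends mu to mu' with
     \int phi dmu' = \int (chordal phi a b) dmu, since mu' has no atom in
     (a,b) and agrees with mu off [a,b] and in the moments of order 0 and 1.
   So \int phi d(v mu) <= \int psi d(v mu) = \int psi dmu <= \int psi dmu'
   = \int phi d(bar v mu') for psi = chordal phi a b [cx_le_step], and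
   induction along V [cx_le_seq] gives the theorem. *)

Section ConvexFunctions.
Variable R : realFieldType.
Implicit Types (f g : R -> R).

Definition convex f := forall x y z : R, x <= y -> y <= z ->
  f y * (z - x) <= f x * (z - y) + f z * (y - x).

Lemma convex_ext f g : f =1 g -> convex f -> convex g.
Proof. by move=> fg cf x y z xy yz; rewrite -!fg; apply: cf. Qed.

Lemma sqr_convex : convex (fun x => x ^+ 2).
Proof.
move=> x y z xy yz.
have defect : x ^+ 2 * (z - y) + z ^+ 2 * (y - x) - y ^+ 2 * (z - x)
    = (z - y) * (y - x) * (z - x) by ring.
rewrite -subr_ge0 defect !mulr_ge0 // subr_ge0 //; exact: le_trans yz.
Qed.

Lemma max_convex f g : convex f -> convex g -> convex (fun x => Num.max (f x) (g x)).
Proof.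
move=> cf cg x y z xy yz.
have zy : 0 <= z - y by rewrite subr_ge0.
have yx : 0 <= y - x by rewrite subr_ge0.
have below_max h : (h = f \/ h = g) -> convex h ->
    h y * (z - x) <= Num.max (f x) (g x) * (z - y) + Num.max (f z) (g z) * (y - x).
  move=> hfg ch; apply: le_trans (ch x y z xy yz) _.
  by case: hfg => ->; apply: lerD; apply: ler_wpM2r; rewrite // le_max lexx ?orbT.
by case: (leP (f y) (g y)) => _; apply: below_max; auto.
Qed.

Section Chord.
Variables (phi : R -> R) (a b : R).

Definition chord_slope := (phi b - phi a) / (b - a).
Definition chord_icpt := phi a - chord_slope * a.
Definition chord x := chord_icpt + chord_slope * x.
Definition chordal x := if a <= x <= b then chord x else phi x.

Lemma chord_a : chord a = phi a.
Proof. by rewrite /chord /chord_icpt subrK. Qed.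

Lemma chord_b : b != a -> chord b = phi b.
Proof. by move=> ba; rewrite /chord /chord_icpt /chord_slope; field; rewrite subr_eq0. Qed.

Lemma chord_three_point x y z : chord y * (z - x) = chord x * (z - y) + chord z * (y - x).
Proof. by rewrite /chord; ring. Qed.

Hypotheses (phi_convex : convex phi) (ab : a < b).

Lemma chord_ge x : a <= x <= b -> phi x <= chord x.
Proof.
case/andP=> ax xb; have ba : 0 < b - a by rewrite subr_gt0.
rewrite -(ler_pM2r ba) (chord_three_point a) chord_a chord_b ?gt_eqF //.
exact: phi_convex.
Qed.

Lemma chord_le x : ~~ (a <= x <= b) -> chord x <= phi x.
Proof.
have ba : 0 < b - a by rewrite subr_gt0.
have chb : chord b = phi b by rewrite chord_b ?gt_eqF.
rewrite negb_and -!ltNge -(ler_pM2r ba) => /orP[xa|bx].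
- rewrite -(lerD2r (chord b * (a - x))) -chord_three_point chord_a chb.
  exact: phi_convex (ltW xa) (ltW ab).
- rewrite -(lerD2l (chord a * (x - b))) -chord_three_point chord_a chb.
  exact: phi_convex (ltW ab) (ltW bx).
Qed.

Lemma chordal_max x : chordal x = Num.max (phi x) (chord x).
Proof.
rewrite /chordal; case: ifP => xab; first by rewrite max_r // chord_ge.
by rewrite max_l // chord_le // xab.
Qed.
End Chord.

Lemma chordal_degenerate phi a b : ~~ (a < b) -> chordal phi a b =1 phi.
Proof.
move=> nab x; rewrite /chordal; case: ifP => // /andP[ax xb].
suff -> : x = a by rewrite chord_a.
by apply/eqP; rewrite eq_le ax andbT (le_trans xb) // leNgt.
Qed.

Lemma chordal_convex phi a b : convex phi -> convex (chordal phi a b).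
Proof.
move=> cphi; have [ab|nab] := boolP (a < b).
- apply: (@convex_ext (fun x => Num.max (phi x) (chord phi a b x))).
    by move=> x; rewrite chordal_max.
  by apply: max_convex => // x y z _ _; rewrite chord_three_point.
- by apply: convex_ext cphi => x; rewrite chordal_degenerate.
Qed.

Lemma chordal_ge phi a b x : convex phi -> phi x <= chordal phi a b x.
Proof.
move=> cphi; have [ab|nab] := boolP (a < b).
- by rewrite chordal_max // le_max lexx.
- by rewrite chordal_degenerate.
Qed.

Definition excess phi a b x := if a <= x <= b then 0 else phi x - chord phi a b x.

Lemma chordal_split phi a b x :
  chordal phi a b x = excess phi a b x + (chord_icpt phi a b + chord_slope phi a b * x).
Proof. by rewrite /chordal /excess /chord; case: ifP; rewrite ?add0r ?subrK. Qed.

End ConvexFunctions.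

Section Integrals.
Variable R : realFieldType.
Implicit Types (mu nu d : atoms R) (f g : R -> R).

Definition integral f mu : R := \sum_(p <- mu) p.2 * f p.1.

Definition cx_le mu nu := forall phi, convex phi -> integral phi mu <= integral phi nu.

Lemma integral_ext f g mu : f =1 g -> integral f mu = integral g mu.
Proof. by move=> fg; apply: eq_bigr => p _; rewrite fg. Qed.

Lemma integralD f g mu :
  integral (fun x => f x + g x) mu = integral f mu + integral g mu.
Proof. by rewrite /integral -big_split; apply: eq_bigr => p _; rewrite mulrDr. Qed.

Lemma integral_affine (c0 c1 : R) mu :
  integral (fun x => c0 + c1 * x) mu = c0 * moment 0 mu + c1 * moment 1 mu.
Proof.
rewrite /integral /moment !mulr_sumr -big_split; apply: eq_bigr => p _.
by rewrite expr0 expr1 mulr1 mulrDr mulrCA [_ * p.2]mulrC.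
Qed.

Lemma integral_le f g mu : (forall p, p \in mu -> 0 < p.2) -> (forall x, f x <= g x) ->
  integral f mu <= integral g mu.
Proof.
move=> pos fg; rewrite /integral big_seq [X in _ <= X]big_seq; apply: ler_sum => p pmu.
by rewrite ler_wpM2l // ltW // pos.
Qed.

Lemma integral_masses f mu (s : seq R) : uniq s -> {subset map fst mu <= s} ->
  integral f mu = \sum_(x <- s) f x * mass mu x.
Proof.
move=> us sub; rewrite /mass /meas.
under eq_bigr => x _ do rewrite mulr_sumr big_mkcond.
rewrite exchange_big /integral; apply: eq_big_seq => p pmu /=.
rewrite -big_mkcond (eq_bigl (pred1 p.1)) => [|x]; last by rewrite /= eq_sym.
rewrite -big_filter filter_pred1_uniq ?sub ?map_f //.
by rewrite big_seq1 mulrC.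
Qed.

Lemma integral_eq_mass f mu nu : (forall x, f x != 0 -> mass mu x = mass nu x) ->
  integral f mu = integral f nu.
Proof.
move=> eq_mass; set s := undup (map fst mu ++ map fst nu).
have us : uniq s := undup_uniq _.
rewrite (@integral_masses f mu s us); last by move=> x xs; rewrite mem_undup mem_cat xs.
rewrite (@integral_masses f nu s us); last by move=> x xs; rewrite mem_undup mem_cat xs orbT.
apply: eq_bigr => x _; have [->|fx] := eqVneq (f x) 0; first by rewrite !mul0r.
by rewrite eq_mass.
Qed.

Lemma integral_mass_add f mu nu d : (forall x, mass nu x = mass mu x + mass d x) ->
  integral f nu = integral f mu + integral f d.
Proof.
move=> add_mass; set s := undup (map fst nu ++ map fst mu ++ map fst d).
have us : uniq s := undup_uniq _.
rewrite (@integral_masses f nu s us); last by move=> x xs; rewrite mem_undup !mem_cat xs.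
rewrite (@integral_masses f mu s us); last by move=> x xs; rewrite mem_undup !mem_cat xs orbT.
rewrite (@integral_masses f d s us); last by move=> x xs; rewrite mem_undup !mem_cat xs !orbT.
by rewrite -big_split; apply: eq_bigr => x _; rewrite add_mass mulrDr.
Qed.

Lemma integral_chordal phi a b mu : integral (chordal phi a b) mu =
  integral (excess phi a b) mu
  + (chord_icpt phi a b * moment 0 mu + chord_slope phi a b * moment 1 mu).
Proof. by rewrite -integral_affine -integralD; apply: integral_ext => x; apply: chordal_split. Qed.

(* A move on [a, b] leaves the integral of the chordal function unchanged,
   since it is affine on [a, b]. *)
Lemma move_preserves_chordal phi v mu nu : is_move v -> apply_move v mu nu ->
  integral (chordal phi (mv_a v) (mv_b v)) nu = integral (chordal phi (mv_a v) (mv_b v)) mu.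
Proof.
case=> [_ [_ [in_ab [d0 d1]]]] [_ add_mass].
rewrite (integral_mass_add _ add_mass) (integral_chordal _ _ _ (mv_delta v)) d0 d1.
suff -> : integral (excess phi (mv_a v) (mv_b v)) (mv_delta v) = 0.
  by rewrite !mulr0 !addr0.
by apply: big1_seq => p /andP[_ pd]; rewrite /excess in_ab // mulr0.
Qed.

Lemma no_atom_inside mu a b p : is_distribution mu ->
  meas mu (fun x => a < x < b) = 0 -> p \in mu -> ~~ (a < p.1 < b).
Proof.
case=> _ pos m0 pmu; apply/negP => inside.
have : p.2 <= meas mu (fun x => a < x < b).
  rewrite /meas (big_rem p pmu) inside lerDl big_seq_cond sumr_ge0 // => q.
  by case/andP=> /mem_rem /pos /ltW.
by rewrite m0 leNgt pos.
Qed.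

Lemma extreme_move_chordal phi a b mu mu' : extreme_move a b mu mu' ->
  integral phi mu' = integral (chordal phi a b) mu.
Proof.
case=> [dist' [m0 [out_mass [e0 e1]]]].
have support_ends p : p \in mu' -> a <= p.1 <= b -> p.1 = a \/ p.1 = b.
  move=> pmu /andP[ap pb]; have := no_atom_inside dist' m0 pmu.
  rewrite !lt_neqAle ap pb !andbT negb_and !negbK => /orP[/eqP|/eqP]; auto.
transitivity (integral (chordal phi a b) mu').
  apply: eq_big_seq => p pmu; congr (_ * _); rewrite /chordal; case: ifP => // pab.
  case: (support_ends p pmu pab) => ->; first by rewrite chord_a.
  have [ba|ba] := eqVneq b a; first by rewrite ba chord_a.
  by rewrite chord_b.
rewrite !integral_chordal e0 e1; congr (_ + _); apply: integral_eq_mass => x.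
by rewrite /excess; case: ifP => [_|xab _]; [rewrite eqxx | rewrite out_mass ?xab].
Qed.

Lemma cx_le_step v mu mu' nu nu' : is_move v -> apply_move v mu nu ->
  extreme_move (mv_a v) (mv_b v) mu' nu' -> cx_le mu mu' -> cx_le nu nu'.
Proof.
move=> mv app ext le_mu phi cphi.
have pos : forall p, p \in nu -> 0 < p.2 by case: app => [[_ pos] _].
apply: le_trans (integral_le pos (fun x => chordal_ge (mv_a v) (mv_b v) x cphi)) _.
rewrite (move_preserves_chordal phi mv app) (extreme_move_chordal phi ext).
exact/le_mu/chordal_convex.
Qed.

Lemma cx_le_seq V mu nu mu' nu' : all_moves V -> apply_seq V mu nu ->
  extreme_seq V mu' nu' -> cx_le mu mu' -> cx_le nu nu'.
Proof.
move=> allV app; elim: app allV mu' nu' => [m|v vs m m1 n app1 _ IH] /= allV mu' nu' ext le_m.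
  by inversion ext; subst.
case: allV => mv allvs.
inversion ext as [|v' vs' m' m1' n' ext1 exts]; subst.
exact: IH allvs _ _ exts (cx_le_step mv app1 ext1 le_m).
Qed.

End Integrals.

Theorem mainTheorem12 (R : realFieldType) (mu : atoms R) (V : seq (move R))
    (Vmu barVmu : atoms R) :
  is_distribution mu ->
  all_moves V ->
  apply_seq V mu Vmu ->
  extreme_seq V mu barVmu ->
  moment 2 Vmu <= moment 2 barVmu.
Proof.
move=> _ allV app ext.
have cx : cx_le Vmu barVmu by apply: cx_le_seq allV app ext _ => phi _; exact: lexx.
exact: cx _ (@sqr_convex R).
Qed.
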